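(* For each natural number $N$ there exists $d_N>0$ such that for every complex $x$ with $|x|\ge d_N$ there exists $\theta\in\mathbb{C}$ with $|\theta|\le1$ such that \[ \log\Bigl(1-\sum_{n=1}^N\frac{n!}{x^n}\Bigr)^{-1}=\sum_{n=1}^N\frac{a_n}{n}\frac{1}{x^n}+\theta\,\frac{a_{N+1}}{N+1}\frac{1}{x^{N+1}}. \]
   Context: $\log$ denotes the principal branch of the logarithm. The integers $a_n$ are defined by $a_1=1$ and $a_n=n\cdot n!+\sum_{k=1}^{n-1}k!\,a_{n-k}$ for $n\ge2$; equivalently, as formal power series in $1/x$, $\log\bigl(1-\sum_{n\ge1}n!\,x^{-n}\bigr)^{-1}=\sum_{n\ge1}\frac{a_n}{n}x^{-n}$. *)

From Stdlib Require Import Reals Arith List.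
From Coquelicot Require Import Coquelicot.
Open Scope R_scope.

(* Principal argument in (-PI, PI] of a nonzero complex number
   (value 0 at z = 0, irrelevant here). *)
Definition Carg (z : C) : R :=
  if Rle_dec 0 (Im z) then acos (Re z / Cmod z) else - acos (Re z / Cmod z).

Definition Clog (z : C) : C := (ln (Cmod z), Carg z).

Fixpoint nsum1 (f : nat -> nat) (m : nat) : nat :=
  match m with O => O | S p => (nsum1 f p + f (S p))%nat end.

(* aux m j = a_j for 1 <= j <= m (and 0 for j = 0). *)
Fixpoint aux (m : nat) : nat -> nat :=
  match m with
  | O => fun _ => O
  | S p => let f := aux p in
      fun j => if (j <=? p)%nat then f j
               else if (j =? 1)%nat then 1%nat
               else (j * fact j + nsum1 (fun k => fact k * f (j - k)%nat) (j - 1))%nat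
  end.

(* a_1 = 1, a_n = n*n! + sum_{k=1}^{n-1} k! a_{n-k} for n >= 2 (a_0 := 0, unused). *)
Definition a (n : nat) : nat := aux n n.

(* Put u = 1/x, P(z) = sum_{n<=N} n! z^n and G(z) = sum_{n<=N} (a_n/n) z^n, and follow
   h(t) = log (1 - P(tu))^(-1) - G(tu) along t in [0,1], with h(0) = 0.  Its derivative is
   u (P' - (1 - P) G')(tu) / (1 - P(tu)).  The recursion defining a_n is exactly the statement
   that the power series P' - (1 - P) G' vanishes below degree N, its z^N coefficient being
   a_{N+1} - (N+1)(N+1)! < a_{N+1}.  For |u| small enough the higher terms and the factor
   1/(1 - P) are absorbed into that gap, so |h'(t)| <= a_{N+1} |u|^(N+1) t^N, and the mean
   value inequality gives |h(1)| <= a_{N+1}/(N+1) |u|^(N+1). *)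
From Stdlib Require Import Reals Arith Lia Lra.
From Coquelicot Require Import Coquelicot.
Open Scope R_scope.

Lemma aux_a m j : (j <= m)%nat -> aux m j = a j.
Proof.
  unfold a; induction m as [|p IH]; intros Hj.
  - now replace j with 0%nat by lia.
  - destruct (Nat.eq_dec j (S p)) as [->|Hne]; [reflexivity|].
    simpl; replace (j <=? p)%nat with true by (symmetry; apply Nat.leb_le; lia).
    apply IH; lia.
Qed.

Lemma aux_succ p j : aux (S p) j =
  if (j <=? p)%nat then aux p j else if (j =? 1)%nat then 1%nat
  else (j * fact j + nsum1 (fun k => fact k * aux p (j - k)%nat) (j - 1))%nat.
Proof. reflexivity. Qed.

Lemma INR_nsum1 f m : INR (nsum1 f m) = sum_n_m (fun k => INR (f k)) 1 m.
Proof.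
  induction m as [|m IH]; simpl.
  - now rewrite sum_n_m_zero by lia.
  - now rewrite plus_INR, IH, sum_n_Sm by lia.
Qed.

Lemma a_rec n : (1 <= n)%nat ->
  INR (a n) = INR n * INR (fact n) + sum_n_m (fun k => INR (fact k) * INR (a (n - k))) 1 (n - 1).
Proof.
  intros Hn; destruct n as [|[|p]]; [lia| |].
  - simpl; rewrite sum_n_m_zero by lia; simpl; unfold zero; simpl; ring.
  - unfold a at 1; rewrite aux_succ.
    replace (S (S p) <=? S p)%nat with false by (symmetry; apply Nat.leb_gt; lia).
    replace (S (S p) =? 1)%nat with false by (symmetry; apply Nat.eqb_neq; lia).
    rewrite plus_INR, mult_INR, INR_nsum1; replace (S (S p) - 1)%nat with (S p) by lia.
    f_equal; apply sum_n_m_ext_loc; intros k Hk.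
    now rewrite mult_INR, aux_a by lia.
Qed.

Lemma sum_n_m_le_loc (f g : nat -> R) n m :
  (forall k, (n <= k <= m)%nat -> f k <= g k) -> sum_n_m f n m <= sum_n_m g n m.
Proof.
  revert n; induction m as [|m IH]; intros n H.
  - destruct n; [rewrite !sum_n_n; apply H; lia|].
    rewrite !sum_n_m_zero by lia; apply Rle_refl.
  - destruct (le_lt_dec n (S m)).
    + rewrite !sum_n_Sm by lia; apply Rplus_le_compat; [apply IH|apply H]; intros; try apply H; lia.
    + rewrite !sum_n_m_zero by lia; apply Rle_refl.
Qed.

Lemma sum_n_m_nonneg (f : nat -> R) n m :
  (forall k, (n <= k <= m)%nat -> 0 <= f k) -> 0 <= sum_n_m f n m.
Proof.
  intros H; replace 0 with (sum_n_m (fun _ => 0) n m).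
  - now apply sum_n_m_le_loc.
  - exact (sum_n_m_const_zero (G:=R_AbelianMonoid) n m).
Qed.

Lemma sum_n_m_morph {G H : AbelianMonoid} (h : G -> H) :
  h zero = zero -> (forall x y, h (plus x y) = plus (h x) (h y)) ->
  forall f n m, h (sum_n_m f n m) = sum_n_m (fun k => h (f k)) n m.
Proof.
  intros h0 hplus f n m; revert n; induction m as [|m IH]; intros n.
  - destruct n; [now rewrite !sum_n_n|now rewrite !sum_n_m_zero by lia].
  - destruct (le_lt_dec n (S m)).
    + now rewrite !sum_n_Sm, hplus, IH by lia.
    + now rewrite !sum_n_m_zero by lia.
Qed.

Lemma RtoC_sum_n_m f n m : RtoC (sum_n_m f n m) = sum_n_m (fun k => RtoC (f k)) n m.
Proof.
  apply (sum_n_m_morph (G:=R_AbelianMonoid) (H:=C_AbelianMonoid)); [reflexivity|].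
  intros x y; apply RtoC_plus.
Qed.

Lemma Cmod_sum_n_m (f : nat -> C) n m :
  Cmod (sum_n_m f n m) <= sum_n_m (fun k => Cmod (f k)) n m.
Proof. exact (norm_sum_n_m (V:=C_NormedModule) f n m). Qed.

Lemma sum_n_m_triangle {G : AbelianMonoid} (f : nat -> nat -> G) N :
  sum_n_m (fun k => sum_n_m (f k) 1 (N - k)) 1 N =
  sum_n_m (fun n => sum_n_m (fun k => f k (n - k)%nat) 1 (n - 1)) 1 N.
Proof.
  induction N as [|N IH]; [now rewrite !sum_n_m_zero by lia|].
  rewrite !(sum_n_Sm _ 1 N), <- IH by lia.
  replace (S N - S N)%nat with 0%nat by lia; replace (S N - 1)%nat with N by lia.
  rewrite (sum_n_m_zero _ 1 0), plus_zero_r by lia.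
  rewrite (sum_n_m_ext_loc _ (fun k => plus (sum_n_m (f k) 1 (N - k)) (f k (S N - k)%nat))).
  - apply sum_n_m_plus.
  - intros k Hk; replace (S N - k)%nat with (S (N - k)) by lia; apply sum_n_Sm; lia.
Qed.

Open Scope C_scope.

Lemma Csum_plus (f g : nat -> C) n m :
  sum_n_m (fun k => f k + g k) n m = sum_n_m f n m + sum_n_m g n m.
Proof. exact (sum_n_m_plus (G:=C_AbelianMonoid) f g n m). Qed.

Lemma Csum_mult_l (c : C) (f : nat -> C) n m :
  c * sum_n_m f n m = sum_n_m (fun k => c * f k) n m.
Proof. symmetry; apply (sum_n_m_mult_l (K:=C_Ring)). Qed.

Lemma Csum_mult_r (c : C) (f : nat -> C) n m :
  sum_n_m f n m * c = sum_n_m (fun k => f k * c) n m.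
Proof. symmetry; apply (sum_n_m_mult_r (K:=C_Ring)). Qed.

(* Restated at carrier [C] (and [R] below) so that [ring] applies to the goals it produces. *)
Lemma Csum_ext (f g : nat -> C) n m :
  (forall k, (n <= k <= m)%nat -> f k = g k) -> sum_n_m f n m = sum_n_m g n m.
Proof. apply sum_n_m_ext_loc. Qed.

Definition poly (c : nat -> R) (N : nat) (z : C) : C :=
  sum_n_m (fun n => RtoC (c n) * z ^ n) 1 N.

Definition dpoly (c : nat -> R) (N : nat) (z : C) : C :=
  sum_n_m (fun n => RtoC (c n * INR n) * z ^ (n - 1)) 1 N.

Definition fact_coef (n : nat) : R := INR (fact n).
Definition log_coef (n : nat) : R := INR (a n) / INR n.

Definition prod_term (z : C) (k m : nat) : C :=
  RtoC (INR (fact k) * INR (a m)) * z ^ (k + m - 1).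

Definition defect_lead (N : nat) : R :=
  sum_n_m (fun k => INR (fact k) * INR (a (S N - k)))%R 1 N.

Definition defect_tail (N : nat) : R :=
  sum_n_m (fun k => sum_n_m (fun m => INR (fact k) * INR (a m))%R (S (S N) - k) N) 1 N.

Lemma dpoly_log_coef N z :
  dpoly log_coef N z = sum_n_m (fun n => RtoC (INR (a n)) * z ^ (n - 1)) 1 N.
Proof.
  apply Csum_ext; intros n Hn; do 2 f_equal.
  unfold log_coef; field; apply not_0_INR; lia.
Qed.

Lemma poly_mul_dpoly N z :
  poly fact_coef N z * dpoly log_coef N z =
  sum_n_m (fun k => sum_n_m (prod_term z k) 1 N) 1 N.
Proof.
  rewrite dpoly_log_coef; unfold poly; rewrite Csum_mult_r.
  apply Csum_ext; intros k Hk; rewrite Csum_mult_l.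
  apply Csum_ext; intros m Hm; unfold prod_term, fact_coef.
  replace (k + m - 1)%nat with (k + (m - 1))%nat by lia.
  rewrite Cpow_add_r, RtoC_mult; ring.
Qed.

(* The recursion for [a], read as P' + (P G' restricted to degrees < N) = G'. *)
Lemma dpoly_add_triangle N z :
  dpoly fact_coef N z + sum_n_m (fun k => sum_n_m (prod_term z k) 1 (N - k)) 1 N =
  sum_n_m (fun n => RtoC (INR (a n)) * z ^ (n - 1)) 1 N.
Proof.
  rewrite sum_n_m_triangle; unfold dpoly; rewrite <- Csum_plus.
  apply Csum_ext; intros n Hn.
  rewrite (Csum_ext _ (fun k => RtoC (INR (fact k) * INR (a (n - k))) * z ^ (n - 1))).
  - rewrite <- Csum_mult_r, <- RtoC_sum_n_m, <- Cmult_plus_distr_r, <- RtoC_plus.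
    unfold fact_coef; rewrite (a_rec n), Rmult_comm by lia; reflexivity.
  - intros k Hk; unfold prod_term; now replace (k + (n - k) - 1)%nat with (n - 1)%nat by lia.
Qed.

Lemma defect_decomp N z :
  dpoly fact_coef N z - (1 - poly fact_coef N z) * dpoly log_coef N z =
  RtoC (defect_lead N) * z ^ N +
  sum_n_m (fun k => sum_n_m (prod_term z k) (S (S N) - k) N) 1 N.
Proof.
  assert (Hsplit : poly fact_coef N z * dpoly log_coef N z =
    sum_n_m (fun k => sum_n_m (prod_term z k) 1 (N - k)) 1 N
    + RtoC (defect_lead N) * z ^ N
    + sum_n_m (fun k => sum_n_m (prod_term z k) (S (S N) - k) N) 1 N).
  { rewrite poly_mul_dpoly.
    rewrite (Csum_ext _ (fun k => sum_n_m (prod_term z k) 1 (N - k) +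
        (RtoC (INR (fact k) * INR (a (S N - k))) * z ^ N
         + sum_n_m (prod_term z k) (S (S N) - k) N))).
    - rewrite !Csum_plus; unfold defect_lead; rewrite RtoC_sum_n_m, Csum_mult_r; ring.
    - intros k Hk.
      rewrite (sum_n_m_Chasles _ 1 (N - k) N), (sum_n_m_Chasles _ (S (N - k)) (S (N - k)) N) by lia.
      rewrite sum_n_n; unfold prod_term at 2.
      replace (k + S (N - k) - 1)%nat with N by lia.
      replace (S (N - k)) with (S N - k)%nat by lia.
      now replace (S (S N - k)) with (S (S N) - k)%nat by lia. }
  replace ((1 - poly fact_coef N z) * dpoly log_coef N z)
    with (dpoly log_coef N z - poly fact_coef N z * dpoly log_coef N z) by ring.
  rewrite Hsplit, dpoly_log_coef, <- dpoly_add_triangle; ring.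
Qed.

Lemma Rsum_mult_r (c : R) (f : nat -> R) n m :
  sum_n_m (fun k => f k * c)%R n m = (sum_n_m f n m * c)%R.
Proof. exact (sum_n_m_mult_r (K:=R_Ring) c f n m). Qed.

Lemma pow_le_pow_of_le_1 (x : R) n m : (0 <= x <= 1)%R -> (n <= m)%nat -> (x ^ m <= x ^ n)%R.
Proof.
  intros Hx Hnm; induction Hnm as [|m _ IH]; [lra|].
  assert (0 <= x ^ m)%R by (apply pow_le; lra).
  simpl; nra.
Qed.

Definition fact_sum (N : nat) : R := sum_n_m (fun n => INR (fact n)) 1 N.

Lemma defect_lead_succ_le N : (defect_lead N + 1 <= INR (a (S N)))%R.
Proof.
  rewrite a_rec by lia; replace (S N - 1)%nat with N by lia; unfold defect_lead.
  assert (1 <= INR (S N))%R by (apply (le_INR 1); lia).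
  assert (1 <= INR (fact (S N)))%R by (apply (le_INR 1), lt_O_fact).
  nra.
Qed.

Lemma Cmod_defect_le N z : (Cmod z <= 1)%R ->
  (Cmod (dpoly fact_coef N z - (1 - poly fact_coef N z) * dpoly log_coef N z)
   <= defect_lead N * Cmod z ^ N + defect_tail N * Cmod z ^ S N)%R.
Proof.
  intros Hz; rewrite defect_decomp.
  eapply Rle_trans; [apply Cmod_triangle|]; apply Rplus_le_compat.
  - rewrite Cmod_mult, Cmod_R, Cmod_pow, Rabs_pos_eq; [lra|].
    apply sum_n_m_nonneg; intros; apply Rmult_le_pos; apply pos_INR.
  - eapply Rle_trans; [apply Cmod_sum_n_m|].
    unfold defect_tail; rewrite <- Rsum_mult_r; apply sum_n_m_le_loc; intros k Hk.
    eapply Rle_trans; [apply Cmod_sum_n_m|].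
    rewrite <- Rsum_mult_r; apply sum_n_m_le_loc; intros m Hm.
    unfold prod_term; rewrite Cmod_mult, Cmod_R, Cmod_pow, Rabs_pos_eq
      by (apply Rmult_le_pos; apply pos_INR).
    apply Rmult_le_compat_l; [apply Rmult_le_pos; apply pos_INR|].
    apply pow_le_pow_of_le_1; [split; [apply Cmod_ge_0|exact Hz]|lia].
Qed.

Lemma Cmod_defect_le_lead N z :
  (Cmod z <= 1)%R -> ((defect_tail N + INR (a (S N)) * fact_sum N) * Cmod z <= 1)%R ->
  (Cmod (dpoly fact_coef N z - (1 - poly fact_coef N z) * dpoly log_coef N z)
   <= INR (a (S N)) * Cmod z ^ N * (1 - fact_sum N * Cmod z))%R.
Proof.
  intros Hz Hsmall; eapply Rle_trans; [now apply Cmod_defect_le|].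
  pose proof (defect_lead_succ_le N).
  assert (0 <= Cmod z ^ N)%R by (apply pow_le, Cmod_ge_0).
  assert (0 <= Cmod z)%R by apply Cmod_ge_0.
  simpl; nra.
Qed.

Lemma Cmod_poly_fact_le N z : (Cmod z <= 1)%R ->
  (Cmod (poly fact_coef N z) <= fact_sum N * Cmod z)%R.
Proof.
  intros Hz; eapply Rle_trans; [apply Cmod_sum_n_m|].
  unfold fact_sum; rewrite <- Rsum_mult_r; apply sum_n_m_le_loc; intros n Hn.
  rewrite Cmod_mult, Cmod_R, Cmod_pow; unfold fact_coef; rewrite Rabs_pos_eq by apply pos_INR.
  apply Rmult_le_compat_l; [apply pos_INR|].
  rewrite <- (pow_1 (Cmod z)) at 2; apply pow_le_pow_of_le_1; [split; [apply Cmod_ge_0|exact Hz]|lia].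
Qed.

Lemma Re_one_sub_poly_fact_ge N z : (Cmod z <= 1)%R ->
  (1 - fact_sum N * Cmod z <= Re (1 - poly fact_coef N z))%R.
Proof.
  intros Hz; pose proof (Cmod_poly_fact_le N z Hz).
  pose proof (Rle_trans _ _ _ (Rle_abs _) (re_le_Cmod (poly fact_coef N z))).
  unfold Cminus, Cplus, Copp, Re in *; simpl; lra.
Qed.

Open Scope R_scope.

Lemma Rsum_ext (f g : nat -> R) n m :
  (forall k, (n <= k <= m)%nat -> f k = g k) -> sum_n_m f n m = sum_n_m g n m.
Proof. apply sum_n_m_ext_loc. Qed.

Lemma is_derive_sum_pow (c : nat -> R) N t :
  is_derive (fun s => sum_n_m (fun n => c n * s ^ n) 1 N) t
            (sum_n_m (fun n => c n * INR n * t ^ (n - 1)) 1 N).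
Proof.
  induction N as [|N IH].
  - rewrite sum_n_m_zero by lia.
    apply (is_derive_ext (fun _ => 0)); [intros s; now rewrite sum_n_m_zero by lia|].
    apply (is_derive_const (K:=R_AbsRing) (V:=R_NormedModule)).
  - rewrite sum_n_Sm by lia.
    apply (is_derive_ext (fun s => sum_n_m (fun n => c n * s ^ n) 1 N + c (S N) * s ^ S N)).
    { intros s; now rewrite sum_n_Sm by lia. }
    apply (is_derive_plus _ (fun s => c (S N) * s ^ S N)); [exact IH|].
    auto_derive; [easy|]; simpl; rewrite Nat.sub_0_r; ring.
Qed.

Section RayDerivative.

Variable p : C -> R.
Hypothesis p_plus : forall z w, p (z + w)%C = p z + p w.
Hypothesis p_scal : forall (r : R) z, p (RtoC r * z)%C = r * p z.

Lemma p_sum_n_m f n m : p (sum_n_m f n m) = sum_n_m (fun k => p (f k)) n m.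
Proof.
  apply (sum_n_m_morph (G:=C_AbelianMonoid) (H:=R_AbelianMonoid)); [|exact p_plus].
  change (p (RtoC 0) = 0); rewrite <- (Cmult_0_l (RtoC 0)), p_scal; ring.
Qed.

Lemma is_derive_poly_ray c N (u : C) t :
  is_derive (fun s => p (poly c N (RtoC s * u))) t (p (u * dpoly c N (RtoC t * u))%C).
Proof.
  apply (is_derive_ext (fun s => sum_n_m (fun n => c n * p (u ^ n)%C * s ^ n) 1 N)).
  { intros s; unfold poly; rewrite p_sum_n_m; apply Rsum_ext; intros n _.
    rewrite Cpow_mult_l, <- RtoC_pow, Cmult_assoc, <- RtoC_mult, p_scal; ring. }
  replace (p (u * dpoly c N (RtoC t * u))%C)
    with (sum_n_m (fun n => c n * p (u ^ n)%C * INR n * t ^ (n - 1)) 1 N).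
  { apply is_derive_sum_pow. }
  unfold dpoly; rewrite Csum_mult_l, p_sum_n_m; apply Rsum_ext; intros [|n] Hn; [lia|].
  replace (S n - 1)%nat with n by lia.
  replace (u * (RtoC (c (S n) * INR (S n)) * (RtoC t * u) ^ n))%C
    with (RtoC (c (S n) * INR (S n) * t ^ n) * u ^ S n)%C
    by (rewrite Cpow_S, Cpow_mult_l, !RtoC_mult, RtoC_pow; ring).
  rewrite p_scal; ring.
Qed.

End RayDerivative.

(* log (1/w) on the half-plane Re w > 0, in a form that can be differentiated. *)
Definition log_inv (w : C) : C :=
  (- ln (Re w ^ 2 + Im w ^ 2) / 2, - atan (Im w / Re w)).

Lemma is_derive_log_inv_parts (X Y : R -> R) t X' Y' :
  is_derive X t X' -> is_derive Y t Y' -> 0 < X t ->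
  is_derive (fun s => - ln (X s ^ 2 + Y s ^ 2) / 2) t
            (- (X t * X' + Y t * Y') / (X t ^ 2 + Y t ^ 2)) /\
  is_derive (fun s => - atan (Y s / X s)) t
            (- (X t * Y' - Y t * X') / (X t ^ 2 + Y t ^ 2)).
Proof.
  intros HX HY Hp.
  assert (0 < X t ^ 2 + Y t ^ 2) by nra.
  assert (DX : Derive (fun s => X s) t = X') by now apply is_derive_unique.
  assert (DY : Derive (fun s => Y s) t = Y') by now apply is_derive_unique.
  split; auto_derive; rewrite ?DX, ?DY.
  - repeat split; [now exists X'|now exists Y'|nra].
  - field; nra.
  - repeat split; [now exists Y'|now exists X'|lra].
  - unfold Rsqr; field; split; nra.
Qed.

Lemma is_derive_log_inv (w : R -> C) (dw : C) t :
  is_derive (fun s => Re (w s)) t (Re dw) -> is_derive (fun s => Im (w s)) t (Im dw) ->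
  0 < Re (w t) ->
  is_derive (fun s => Re (log_inv (w s))) t (Re (- dw / w t)%C) /\
  is_derive (fun s => Im (log_inv (w s))) t (Im (- dw / w t)%C).
Proof.
  intros HX HY Hp.
  destruct (is_derive_log_inv_parts _ _ t _ _ HX HY Hp) as [H1 H2].
  assert (0 < Re (w t) ^ 2 + Im (w t) ^ 2) by nra.
  split; [refine (eq_ind _ _ H1 _ _)|refine (eq_ind _ _ H2 _ _)];
    revert Hp H; destruct (w t) as [x y], dw as [dx dy];
    unfold Cdiv, Cmult, Cinv, Copp, Re, Im; simpl; intros; field; lra.
Qed.

Open Scope C_scope.

Definition denom (N : nat) (u : C) (t : R) : C := 1 - poly fact_coef N (RtoC t * u).

Definition remainder (N : nat) (u : C) (t : R) : C :=
  log_inv (denom N u t) - poly log_coef N (RtoC t * u).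

Definition remainder' (N : nat) (u : C) (t : R) : C :=
  u * dpoly fact_coef N (RtoC t * u) / denom N u t - u * dpoly log_coef N (RtoC t * u).

Lemma is_derive_Re_poly_ray c N u t :
  is_derive (fun s => Re (poly c N (RtoC s * u))) t (Re (u * dpoly c N (RtoC t * u))).
Proof. apply is_derive_poly_ray; [reflexivity|apply re_scal_l]. Qed.

Lemma is_derive_Im_poly_ray c N u t :
  is_derive (fun s => Im (poly c N (RtoC s * u))) t (Im (u * dpoly c N (RtoC t * u))).
Proof. apply is_derive_poly_ray; [reflexivity|apply im_scal_l]. Qed.

Lemma is_derive_remainder N u t : (0 < Re (denom N u t))%R ->
  is_derive (fun s => Re (remainder N u s)) t (Re (remainder' N u t)) /\
  is_derive (fun s => Im (remainder N u s)) t (Im (remainder' N u t)).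
Proof.
  intros Hp; set (dw := - (u * dpoly fact_coef N (RtoC t * u))).
  assert (HX : is_derive (fun s => Re (denom N u s)) t (Re dw)).
  { replace (Re dw) with (0 - Re (u * dpoly fact_coef N (RtoC t * u)))%R
      by (unfold dw, Copp, Re; simpl; ring).
    apply (is_derive_minus (fun _ => 1%R)); [apply (is_derive_const (K:=R_AbsRing) (V:=R_NormedModule))|].
    apply is_derive_Re_poly_ray. }
  assert (HY : is_derive (fun s => Im (denom N u s)) t (Im dw)).
  { replace (Im dw) with (0 - Im (u * dpoly fact_coef N (RtoC t * u)))%R
      by (unfold dw, Copp, Im; simpl; ring).
    apply (is_derive_ext (fun s => 0 - Im (poly fact_coef N (RtoC s * u)))%R).
    { intros s; unfold denom, Cminus, Cplus, Copp, Im; simpl; ring. }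
    apply (is_derive_minus (fun _ => 0%R)); [apply (is_derive_const (K:=R_AbsRing) (V:=R_NormedModule))|].
    apply is_derive_Im_poly_ray. }
  destruct (is_derive_log_inv (denom N u) dw t HX HY Hp) as [H1 H2].
  replace (- dw) with (u * dpoly fact_coef N (RtoC t * u)) in H1, H2 by (unfold dw; ring).
  split.
  - exact (is_derive_minus _ _ t _ _ H1 (is_derive_Re_poly_ray _ _ _ _)).
  - exact (is_derive_minus _ _ t _ _ H2 (is_derive_Im_poly_ray _ _ _ _)).
Qed.

Lemma remainder_0 N u : remainder N u 0 = 0.
Proof.
  assert (P0 : forall c, poly c N (RtoC 0 * u) = 0).
  { intros c; unfold poly; rewrite (Csum_ext _ (fun _ => 0)).
    - exact (sum_n_m_const_zero (G:=C_AbelianMonoid) 1 N).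
    - intros n Hn; rewrite Cpow_mult_l, <- RtoC_pow, pow_i by lia; ring. }
  unfold remainder, denom, log_inv; rewrite !P0; simpl.
  replace ((1 + - 0) * ((1 + - 0) * 1) + (0 + - 0) * ((0 + - 0) * 1))%R with 1%R by ring.
  replace ((0 + - 0) / (1 + - 0))%R with 0%R by field.
  rewrite ln_1, atan_0; apply injective_projections; simpl; field.
Qed.

Open Scope R_scope.

Lemma defect_tail_nonneg N : 0 <= defect_tail N.
Proof.
  apply sum_n_m_nonneg; intros; apply sum_n_m_nonneg; intros.
  apply Rmult_le_pos; apply pos_INR.
Qed.

Lemma fact_sum_nonneg N : 0 <= fact_sum N.
Proof. apply sum_n_m_nonneg; intros; apply pos_INR. Qed.

Lemma a_succ_ge_1 N : 1 <= INR (a (S N)).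
Proof.
  pose proof (defect_lead_succ_le N).
  assert (0 <= defect_lead N)
    by (apply sum_n_m_nonneg; intros; apply Rmult_le_pos; apply pos_INR).
  lra.
Qed.

Definition radius (N : nat) : R := / (1 + defect_tail N + INR (a (S N)) * fact_sum N).

Lemma radius_pos N : 0 < radius N.
Proof.
  pose proof (defect_tail_nonneg N); pose proof (fact_sum_nonneg N); pose proof (a_succ_ge_1 N).
  apply Rinv_0_lt_compat; nra.
Qed.

Lemma radius_ray_small N u t : 0 <= t <= 1 -> Cmod u <= radius N ->
  (1 + defect_tail N + INR (a (S N)) * fact_sum N) * Cmod (RtoC t * u) <= 1.
Proof.
  intros Ht Hu.
  pose proof (defect_tail_nonneg N); pose proof (fact_sum_nonneg N); pose proof (a_succ_ge_1 N).
  pose proof (Cmod_ge_0 u).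
  rewrite Cmod_mult, Cmod_R, Rabs_pos_eq by lra.
  unfold radius in Hu.
  apply Rmult_le_compat_l with (r := 1 + defect_tail N + INR (a (S N)) * fact_sum N) in Hu;
    [|nra].
  rewrite Rinv_r in Hu by nra; nra.
Qed.

Lemma small_disc_bounds N z :
  (1 + defect_tail N + INR (a (S N)) * fact_sum N) * Cmod z <= 1 ->
  Cmod z <= 1 /\ fact_sum N * Cmod z < 1.
Proof.
  intros Hsmall.
  pose proof (defect_tail_nonneg N); pose proof (fact_sum_nonneg N); pose proof (a_succ_ge_1 N).
  assert (Hs0 : 0 <= Cmod z) by apply Cmod_ge_0.
  assert (0 <= defect_tail N * Cmod z) by (apply Rmult_le_pos; lra).
  assert (0 <= fact_sum N * Cmod z) by (apply Rmult_le_pos; lra).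
  assert (fact_sum N * Cmod z <= INR (a (S N)) * fact_sum N * Cmod z) by nra.
  split; [nra|].
  destruct (Req_dec (Cmod z) 0) as [E|E]; [rewrite E; lra|nra].
Qed.

Lemma remainder'_bound N u t : 0 <= t <= 1 -> Cmod u <= radius N ->
  0 < Re (denom N u t) /\
  Cmod (remainder' N u t) <= INR (a (S N)) * Cmod u ^ S N * t ^ N.
Proof.
  intros Ht Hu.
  pose proof (radius_ray_small N u t Ht Hu) as Hsmall.
  set (z := (RtoC t * u)%C) in Hsmall.
  destruct (small_disc_bounds N z Hsmall) as [Hz1 HD].
  pose proof (Re_one_sub_poly_fact_ge N z Hz1) as HRe.
  assert (Hpos : 0 < Re (denom N u t)) by (unfold denom; fold z; lra).
  split; [exact Hpos|].
  assert (Hmod : 1 - fact_sum N * Cmod z <= Cmod (denom N u t))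
    by (eapply Rle_trans; [exact HRe|]; eapply Rle_trans; [apply Rle_abs|apply re_le_Cmod]).
  assert (Hnz : denom N u t <> RtoC 0)
    by (intros E; rewrite E in Hpos; simpl in Hpos; lra).
  replace (remainder' N u t) with
    (u * (dpoly fact_coef N z - (1 - poly fact_coef N z) * dpoly log_coef N z) / denom N u t)%C
    by (unfold remainder', denom; fold z; field; exact Hnz).
  rewrite Cmod_div, Cmod_mult by exact Hnz.
  pose proof (a_succ_ge_1 N); pose proof (Cmod_ge_0 u).
  apply Rle_div_l; [lra|].
  eapply Rle_trans.
  { apply Rmult_le_compat_l; [lra|].
    apply Cmod_defect_le_lead; [exact Hz1|].
    pose proof (Cmod_ge_0 z); lra. }
  replace (Cmod z ^ N) with (t ^ N * Cmod u ^ N)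
    by (unfold z; rewrite Cmod_mult, Cmod_R, Rabs_pos_eq, Rpow_mult_distr by lra; reflexivity).
  assert (0 <= t ^ N * Cmod u ^ N) by (apply Rmult_le_pos; apply pow_le; lra).
  assert (0 <= INR (a (S N)) * Cmod u * (t ^ N * Cmod u ^ N))
    by (apply Rmult_le_pos; [apply Rmult_le_pos|]; lra).
  simpl; nra.
Qed.

Lemma dot_le_Cmod (v1 v2 : R) (z : C) : v1 ^ 2 + v2 ^ 2 = 1 -> v1 * Re z + v2 * Im z <= Cmod z.
Proof.
  intros Hv; pose proof (Cmod2_alt z); pose proof (Cmod_ge_0 z).
  assert (0 <= (v1 * Im z - v2 * Re z) ^ 2) by apply pow2_ge_0.
  nra.
Qed.

Lemma Cmod_le_of_derive_le (f df : R -> C) (K : R) N :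
  f 0 = RtoC 0 ->
  (forall t, 0 <= t <= 1 ->
     is_derive (fun s => Re (f s)) t (Re (df t)) /\
     is_derive (fun s => Im (f s)) t (Im (df t)) /\
     Cmod (df t) <= K * t ^ N) ->
  Cmod (f 1) <= K / INR (S N).
Proof.
  intros Hf0 Hd.
  assert (HSN : 0 < INR (S N)) by (apply lt_0_INR; lia).
  assert (HK : 0 <= K).
  { destruct (Hd 1 ltac:(lra)) as (_ & _ & Hb); rewrite pow1 in Hb.
    pose proof (Cmod_ge_0 (df 1)); lra. }
  set (m := Cmod (f 1)).
  destruct (Req_dec m 0) as [Hm|Hm]; [rewrite Hm; apply Rdiv_le_0_compat; lra|].
  assert (Hm0 : 0 < m) by (pose proof (Cmod_ge_0 (f 1)); unfold m in *; lra).
  (* project f onto the direction of f 1 *)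
  set (v1 := Re (f 1) / m); set (v2 := Im (f 1) / m).
  assert (Hm2 : Re (f 1) ^ 2 + Im (f 1) ^ 2 = m ^ 2) by (symmetry; apply Cmod2_alt).
  assert (Hv : v1 ^ 2 + v2 ^ 2 = 1).
  { unfold v1, v2; replace ((Re (f 1) / m) ^ 2 + (Im (f 1) / m) ^ 2)
      with ((Re (f 1) ^ 2 + Im (f 1) ^ 2) / m ^ 2) by (field; lra).
    rewrite Hm2; field; lra. }
  assert (Hv1 : v1 * Re (f 1) + v2 * Im (f 1) = m).
  { unfold v1, v2; replace (Re (f 1) / m * Re (f 1) + Im (f 1) / m * Im (f 1))
      with ((Re (f 1) ^ 2 + Im (f 1) ^ 2) / m) by (field; lra).
    rewrite Hm2; field; lra. }
  set (chi := fun s => v1 * Re (f s) + v2 * Im (f s) - K / INR (S N) * s ^ S N).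
  set (dchi := fun s => v1 * Re (df s) + v2 * Im (df s) - K * s ^ N).
  assert (Hchi : forall t, 0 <= t <= 1 -> is_derive chi t (dchi t) /\ dchi t <= 0).
  { intros t Ht; destruct (Hd t Ht) as (HX & HY & Hb); split.
    - assert (Hpow : is_derive (fun s => K / INR (S N) * s ^ S N) t (K * t ^ N)).
      { replace (K * t ^ N) with (K / INR (S N) * (INR (S N) * 1 * t ^ Nat.pred (S N)))
          by (cbn [Nat.pred]; field; lra).
        apply is_derive_scal, is_derive_pow; exact (is_derive_id (K:=R_AbsRing) t). }
      exact (is_derive_minus _ _ t _ _
               (is_derive_plus _ _ t _ _ (is_derive_scal _ t v1 _ HX) (is_derive_scal _ t v2 _ HY))
               Hpow).
    - pose proof (dot_le_Cmod v1 v2 (df t) Hv); unfold dchi; lra. }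
  destruct (MVT_gen chi 0 1 dchi) as [c [Hc Hmvt]];
    rewrite ?Rmin_left, ?Rmax_right in * by lra.
  - intros t Ht; apply Hchi; lra.
  - intros t Ht; apply continuity_pt_filterlim.
    apply (ex_derive_continuous (K:=R_AbsRing) (V:=R_NormedModule)).
    exists (dchi t); apply Hchi; exact Ht.
  - assert (Hchi1 : chi 1 = m - K / INR (S N)).
    { unfold chi; rewrite pow1, Hv1; ring. }
    assert (Hchi0 : chi 0 = 0).
    { unfold chi; rewrite Hf0, pow_i by lia; simpl; ring. }
    destruct (Hchi c Hc) as [_ Hneg].
    rewrite Hchi1, Hchi0 in Hmvt; nra.
Qed.

Lemma Carg_right_half_plane (z : C) : 0 < Re z -> Carg z = atan (Im z / Re z).
Proof.
  intros Hz.
  assert (Hm : 0 < Cmod z) by (pose proof (re_le_Cmod z); pose proof (Rle_abs (Re z)); lra).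
  assert (Hm2 : Cmod z ^ 2 = Re z ^ 2 + Im z ^ 2) by apply Cmod2_alt.
  assert (Hacos : acos (Re z / Cmod z) = atan (Rabs (Im z) / Re z)).
  { rewrite acos_atan by (apply Rdiv_lt_0_compat; lra); f_equal.
    replace (1 - (Re z / Cmod z)²) with ((Im z / Cmod z)²)
      by (unfold Rsqr; field_simplify; try lra; rewrite Hm2; field; nra).
    rewrite sqrt_Rsqr_abs; unfold Rdiv.
    rewrite Rabs_mult, Rabs_inv, (Rabs_pos_eq (Cmod z)) by lra.
    field; split; lra. }
  unfold Carg; destruct (Rle_dec 0 (Im z)) as [H|H].
  - now rewrite Hacos, Rabs_pos_eq.
  - rewrite Hacos, Rabs_left by lra; unfold Rdiv.
    rewrite Ropp_mult_distr_l_reverse, atan_opp; ring.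
Qed.

Lemma ln_sqrt x : 0 < x -> ln (sqrt x) = ln x / 2.
Proof.
  intros Hx; assert (0 < sqrt x) by (apply sqrt_lt_R0; lra).
  rewrite <- (sqrt_sqrt x) at 2 by lra; rewrite ln_mult by lra; field.
Qed.

Lemma Clog_Cinv (w : C) : 0 < Re w -> Clog (/ w) = log_inv w.
Proof.
  destruct w as [x y]; unfold Re, Im; simpl; intros Hx.
  assert (Hs : 0 < x ^ 2 + y ^ 2) by nra.
  assert (Hw : (x, y) <> RtoC 0) by (intros E; injection E; lra).
  unfold Clog, log_inv; f_equal.
  - rewrite Cmod_inv, ln_Rinv by first [exact Hw | now apply Cmod_gt_0].
    unfold Cmod; simpl; rewrite ln_sqrt by nra; simpl; field.
  - rewrite Carg_right_half_plane; unfold Cinv, Re, Im; cbn [fst snd].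
    + replace (- y / (x ^ 2 + y ^ 2) / (x / (x ^ 2 + y ^ 2))) with (- (y / x)) by (field; lra).
      apply atan_opp.
    + apply Rdiv_lt_0_compat; lra.
Qed.

Open Scope C_scope.

Lemma log_expansion_remainder N u : (Cmod u <= radius N)%R ->
  Clog (/ (1 - poly fact_coef N u)) = poly log_coef N u + remainder N u 1 /\
  (Cmod (remainder N u 1) <= INR (a (S N)) / INR (S N) * Cmod u ^ S N)%R.
Proof.
  intros Hu; split.
  - destruct (remainder'_bound N u 1 ltac:(lra) Hu) as [Hpos _].
    unfold remainder, denom in *; rewrite Cmult_1_l in *.
    rewrite Clog_Cinv by exact Hpos; ring.
  - replace (INR (a (S N)) / INR (S N) * Cmod u ^ S N)%R
      with (INR (a (S N)) * Cmod u ^ S N / INR (S N))%R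
      by (field; apply not_0_INR; lia).
    apply (Cmod_le_of_derive_le (remainder N u) (remainder' N u)); [apply remainder_0|].
    intros t Ht; destruct (remainder'_bound N u t Ht Hu) as [Hpos Hb].
    destruct (is_derive_remainder N u t Hpos); auto.
Qed.

Theorem proposition5p5 :
  forall N : nat, exists dN : R, 0 < dN /\
    forall x : C, dN <= Cmod x ->
      exists theta : C, Cmod theta <= 1 /\
        Clog (Cinv (RtoC 1 - sum_n_m (fun n => RtoC (INR (fact n)) / Cpow x n) 1 N)) =
        sum_n_m (fun n => RtoC (INR (a n) / INR n) / Cpow x n) 1 N
        + theta * RtoC (INR (a (S N)) / INR (S N)) / Cpow x (S N).
Proof.
  intros N; pose proof (radius_pos N) as Hr.
  exists (/ radius N)%R; split; [now apply Rinv_0_lt_compat|]; intros x Hx.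
  assert (Hx0 : x <> 0).
  { intros E; rewrite E, Cmod_0 in Hx; pose proof (Rinv_0_lt_compat _ Hr); lra. }
  assert (Hu : (Cmod (/ x) <= radius N)%R).
  { rewrite Cmod_inv, <- (Rinv_inv (radius N)) by exact Hx0.
    apply Rinv_le_contravar; [now apply Rinv_0_lt_compat|exact Hx]. }
  assert (Hpoly : forall c, sum_n_m (fun n => RtoC (c n) / x ^ n) 1 N = poly c N (/ x)).
  { intros c; apply Csum_ext; intros n _; now rewrite Cpow_inv. }
  replace (sum_n_m (fun n => RtoC (INR (fact n)) / x ^ n) 1 N) with (poly fact_coef N (/ x))
    by (symmetry; apply Hpoly).
  replace (sum_n_m (fun n => RtoC (INR (a n) / INR n) / x ^ n) 1 N) with (poly log_coef N (/ x))
    by (symmetry; apply Hpoly).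
  destruct (log_expansion_remainder N (/ x) Hu) as [-> Hbound].
  set (A := (INR (a (S N)) / INR (S N))%R).
  assert (HA : (0 < A)%R).
  { apply Rdiv_lt_0_compat; [pose proof (a_succ_ge_1 N); lra|apply lt_0_INR; lia]. }
  assert (HA0 : RtoC A <> 0) by (intros E; apply RtoC_inj in E; lra).
  assert (HxN : x ^ S N <> 0) by now apply Cpow_nz.
  exists (remainder N (/ x) 1 * x ^ S N / RtoC A); split; [|field; now split].
  rewrite Cmod_div, Cmod_mult, Cmod_pow, Cmod_R, Rabs_pos_eq by (assumption || lra).
  apply Rle_div_l; [exact HA|].
  assert (Hux : (Cmod (/ x) ^ S N * Cmod x ^ S N = 1)%R)
    by (rewrite <- Rpow_mult_distr, <- Cmod_mult, Cinv_l, Cmod_1 by exact Hx0; apply pow1).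
  assert (HxN' : (0 <= Cmod x ^ S N)%R) by (apply pow_le, Cmod_ge_0).
  pose proof (Rmult_le_compat_r _ _ _ HxN' Hbound) as Hb.
  rewrite Rmult_assoc, Hux in Hb; fold A in Hb; lra.
Qed.
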